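(* Let $M$ be a finite set of primes and let $f,g$ be real functions on the primes such that (i) $p>f(p)\geq g(p)\geq 0$ for all $p\in M$, and (ii) $p>g(p)\geq f(p)\geq 0$ for all primes $p\notin M$. Then for all $z>0$, \[L(z,g)\geq \prod_{p\in M}\frac{p-f(p)}{p-g(p)}\,L(z,f).\]
   Context: For a function $h$ on the primes with $0\le h(p)<p$ for all $p$, and $z>0$, define $L(z,h)=\sum_{q\leq z}\mu^2(q)\prod_{p\mid q}\frac{h(p)}{p-h(p)}$, where $q$ runs over positive integers and $\mu$ is the Möbius function. *)

From mathcomp Require Import all_boot all_order all_algebra.
Set Implicit Arguments. Unset Strict Implicit. Unset Printing Implicit Defensive.
Import Order.TTheory GRing.Theory Num.Theory.
Local Open Scope ring_scope.

Definition squarefree (q : nat) : bool :=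
  [forall p : 'I_q.+1, prime p ==> ~~ (p * p %| q)%N].

Definition mu2 {R : archiRealFieldType} (q : nat) : R := if squarefree q then 1 else 0.

(* L(z,h) = sum_{1 <= q <= z} mu^2(q) prod_{p | q} h(p)/(p - h(p)) ;
   positive integers q <= z are exactly 1 <= q <= truncn z *)
Definition L {R : archiRealFieldType} (z : R) (h : nat -> R) : R :=
  \sum_(1 <= q < (Num.truncn z).+1)
     mu2 q * \prod_(p <- primes q) (h p / (p%:R - h p)).

From mathcomp Require Import all_boot all_order all_algebra.
From mathcomp Require Import zify ring lra.
Import Order.TTheory GRing.Theory Num.Theory.
Local Open Scope ring_scope.
Set Implicit Arguments. Unset Strict Implicit.

(* Changing h at a single prime p from h(p) to k(p) <= h(p) only rescales the
   terms of L with p | q: L(h) = A + F_h(p) B with F_h(p) = h(p)/(p - h(p)),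
   where A sums the terms with p not dividing q and B the cofactors q/p of the
   others.  As q |-> q/p injects the squarefree multiples of p into the
   squarefree numbers prime to p, B <= A, whence
   L(k) - c L(h) = (h(p) - k(p))/(p - k(p)) (A - B) >= 0 for
   c = (p - h(p))/(p - k(p)).  Changing g into f one prime of M at a time
   produces the product; at the other primes f <= g, and L is monotone in h. *)

Lemma squarefree_ndvd_divn q p : squarefree q -> (0 < q)%N -> prime p ->
  (p %| q)%N -> ~~ (p %| q %/ p)%N.
Proof.
move=> /forallP sq q_gt0 p_pr p_q.
have p_lt : (p < q.+1)%N by rewrite ltnS dvdn_leq.
have /implyP /(_ p_pr) /= := sq (Ordinal p_lt).
apply: contra => p_qp.
by rewrite -(divnK p_q) dvdn_mul.
Qed.

Lemma squarefree_divn q d : squarefree q -> (0 < q)%N -> (d %| q)%N ->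
  squarefree (q %/ d).
Proof.
move=> /forallP sq q_gt0 d_q; apply/forallP => r; apply/implyP => r_pr.
apply/negP => rr_qd.
have rr_q : (r * r %| q)%N.
  by apply: dvdn_trans rr_qd _; rewrite -{2}(divnK d_q) dvdn_mulr.
have r_lt : (r < q.+1)%N by have := dvdn_leq q_gt0 rr_q; nia.
by have /implyP /(_ r_pr) /= := sq (Ordinal r_lt); rewrite rr_q.
Qed.

Lemma perm_primes_squarefree q p : squarefree q -> (0 < q)%N -> prime p ->
  (p %| q)%N -> perm_eq (primes q) (p :: primes (q %/ p)).
Proof.
move=> sq q_gt0 p_pr p_q.
have qp_gt0 : (0 < q %/ p)%N by rewrite divn_gt0 ?prime_gt0 // dvdn_leq.
apply: uniq_perm; first exact: primes_uniq.
  by rewrite /= primes_uniq mem_primes p_pr qp_gt0 squarefree_ndvd_divn.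
move=> r; rewrite -{1}(divnK p_q) primesM ?qp_gt0 ?prime_gt0 //.
by rewrite (primes_prime p_pr) !in_cons in_nil orbF orbC.
Qed.

Lemma sum_dvdn_divn (V : nmodType) (G : nat -> V) p N : (0 < p)%N ->
  \sum_(1 <= q < N.+1 | (p %| q)%N) G (q %/ p)%N =
  \sum_(1 <= m < (N %/ p).+1) G m.
Proof.
move=> p_gt0; elim: N => [|N IH]; first by rewrite div0n !big_geq.
rewrite big_mkcond big_nat_recr //= -big_mkcond IH divnS //.
by case: (p %| N.+1)%N; rewrite /= ?addr0 // add1n [in RHS]big_nat_recr.
Qed.

Section SieveSum.
Variable R : archiRealFieldType.
Implicit Types (h k : nat -> R) (N p q : nat).

Definition hratio h p : R := h p / (p%:R - h p).
Definition sieve_term h q : R := mu2 q * \prod_(r <- primes q) hratio h r.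
Definition sieve_sum N h : R := \sum_(1 <= q < N.+1) sieve_term h q.
Definition sieve_weight h := forall p, prime p -> 0 <= h p < p%:R.

Lemma mu2_ge0 q : 0 <= mu2 q :> R.
Proof. by rewrite /mu2; case: ifP. Qed.

Lemma hratio_ge0 h p : 0 <= h p < p%:R -> 0 <= hratio h p.
Proof. by case/andP=> h_ge0 h_lt; rewrite divr_ge0 // subr_ge0 ltW. Qed.

Lemma ler_hratio h k p : 0 <= k p -> k p <= h p -> h p < p%:R ->
  hratio k p <= hratio h p.
Proof.
move=> k_ge0 k_le h_lt.
have h_gap : 0 < p%:R - h p by rewrite subr_gt0.
have k_gap : 0 < p%:R - k p by rewrite subr_gt0 (le_lt_trans k_le).
by rewrite /hratio ler_pdivrMr // mulrAC ler_pdivlMr //; nra.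
Qed.

Lemma prod_hratio_ge0 h n : sieve_weight h ->
  0 <= \prod_(r <- primes n) hratio h r.
Proof.
move=> wh; rewrite big_seq; apply: prodr_ge0 => r.
by rewrite mem_primes => /and3P[r_pr _ _]; apply/hratio_ge0/wh.
Qed.

Lemma sieve_term_ge0 h q : sieve_weight h -> 0 <= sieve_term h q.
Proof. by move=> wh; rewrite mulr_ge0 ?mu2_ge0 ?prod_hratio_ge0. Qed.

Lemma ler_sieve_sum N h k :
  (forall p, prime p -> 0 <= h p /\ h p <= k p /\ k p < p%:R) ->
  sieve_sum N h <= sieve_sum N k.
Proof.
move=> hk; apply: ler_sum => q _; rewrite ler_wpM2l ?mu2_ge0 //.
rewrite big_seq [leRHS]big_seq; apply: ler_prod => r.
rewrite mem_primes => /and3P[r_pr _ _]; have [h_ge0 [h_le k_lt]] := hk r r_pr.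
by rewrite hratio_ge0 ?ler_hratio // h_ge0 (le_lt_trans h_le).
Qed.

Section OnePrime.
Variables (N p : nat) (h : nat -> R).
Hypothesis p_prime : prime p.

Definition sum_ndvd : R := \sum_(1 <= q < N.+1 | ~~ (p %| q)%N) sieve_term h q.
Definition sum_dvd : R :=
  \sum_(1 <= q < N.+1 | (p %| q)%N)
    mu2 q * \prod_(r <- primes (q %/ p)) hratio h r.

Lemma sieve_sum_split k : (forall r, r != p -> k r = h r) ->
  sieve_sum N k = sum_ndvd + hratio k p * sum_dvd.
Proof.
move=> kh; rewrite /sieve_sum (bigID (fun q => p %| q)%N) /= addrC.
congr (_ + _).
  apply: eq_bigr => q p_ndvd; congr (_ * _); apply: eq_big_seq => r.
  rewrite mem_primes => /and3P[_ _ r_q]; rewrite /hratio kh //.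
  by apply: contraNneq p_ndvd => <-.
rewrite big_distrr /= big_nat_cond [in RHS]big_nat_cond.
apply: eq_bigr => q /andP[/andP[q_gt0 _] p_q].
rewrite /sieve_term /mu2; case sq: (squarefree q); last by rewrite !mul0r mulr0.
rewrite (perm_big _ (perm_primes_squarefree sq q_gt0 p_prime p_q)) big_cons.
rewrite !mul1r; congr (_ * _); apply: eq_big_seq => r.
rewrite mem_primes => /and3P[_ _ r_qp]; rewrite /hratio kh //.
by apply: contraNneq (squarefree_ndvd_divn sq q_gt0 p_prime p_q) => r_p;
  rewrite r_p in r_qp.
Qed.

Lemma sum_dvd_le_ndvd : sieve_weight h -> sum_dvd <= sum_ndvd.
Proof.
move=> wh; pose G m := if (p %| m)%N then 0 else sieve_term h m.
have G_ge0 m : 0 <= G m by rewrite /G; case: ifP => _; rewrite ?sieve_term_ge0.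
apply: (@le_trans _ _ (\sum_(1 <= q < N.+1 | (p %| q)%N) G (q %/ p)%N)).
  rewrite /sum_dvd big_nat_cond [leRHS]big_nat_cond.
  apply: ler_sum => q /andP[/andP[q_gt0 _] p_q].
  rewrite /mu2; case sq: (squarefree q); last by rewrite mul0r.
  rewrite /G (negbTE (squarefree_ndvd_divn sq q_gt0 p_prime p_q)).
  by rewrite /sieve_term /mu2 squarefree_divn.
have -> : sum_ndvd = \sum_(1 <= m < N.+1) G m.
  rewrite /sum_ndvd big_mkcond; apply: eq_bigr => q _.
  by rewrite /G; case: (p %| q)%N.
rewrite sum_dvdn_divn ?prime_gt0 // [leRHS](big_cat_nat _ (n := (N %/ p).+1)) //=.
  by rewrite lerDl sumr_ge0.
by rewrite ltnS leq_div.
Qed.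

Lemma sieve_sum_update k : sieve_weight h -> sieve_weight k ->
  (forall r, r != p -> k r = h r) -> k p <= h p ->
  (p%:R - h p) / (p%:R - k p) * sieve_sum N h <= sieve_sum N k.
Proof.
move=> wh wk kh k_le; rewrite -subr_ge0.
have /andP[k_ge0 k_lt] := wk p p_prime; have /andP[_ h_lt] := wh p p_prime.
have k_gap : p%:R - k p != 0 by rewrite subr_eq0 eq_sym lt_eqF.
have h_gap : p%:R - h p != 0 by rewrite subr_eq0 eq_sym lt_eqF.
have -> : sieve_sum N k - (p%:R - h p) / (p%:R - k p) * sieve_sum N h =
          (h p - k p) / (p%:R - k p) * (sum_ndvd - sum_dvd).
  rewrite (sieve_sum_split kh) (sieve_sum_split (k := h)) // /hratio.
  by field; apply/andP.
by rewrite !mulr_ge0 ?invr_ge0 ?subr_ge0 ?sum_dvd_le_ndvd // ltW.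
Qed.

End OnePrime.

Lemma sieve_sum_ge_prod N (M : seq nat) f g : uniq M -> all prime M ->
  (forall p, p \in M -> g p <= f p /\ f p < p%:R /\ 0 <= g p) ->
  (forall p, prime p -> p \notin M -> f p <= g p /\ g p < p%:R /\ 0 <= f p) ->
  (\prod_(p <- M) ((p%:R - f p) / (p%:R - g p))) * sieve_sum N f <=
  sieve_sum N g.
Proof.
elim: M g => [|p M IH] g.
  move=> _ _ _ fg_notM; rewrite big_nil mul1r; apply: ler_sieve_sum => r r_pr.
  by have [? []] := fg_notM r r_pr (negbT (in_nil r)).
move=> /andP[p_notM uM] /andP[p_pr M_pr] fgM fg_notM.
have [gf_p [f_lt_p g_ge0_p]] := fgM p (mem_head p M).
have wg : sieve_weight g.
  move=> r r_pr; case: (boolP (r \in p :: M)) => [r_in | r_notin].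
    by have [gf [f_lt ->]] := fgM r r_in; rewrite (le_lt_trans gf).
  by have [fg [-> f_ge0]] := fg_notM r r_pr r_notin; rewrite (le_trans f_ge0).
pose g' r := if r == p then f p else g r.
have g_off_p r : r != p -> g r = g' r by rewrite /g' => /negbTE ->.
have wg' : sieve_weight g'.
  move=> r r_pr; rewrite /g'; case: eqP => [->|_]; last exact: wg.
  by rewrite f_lt_p (le_trans g_ge0_p).
have ne_p r : r \in M -> r != p by apply: contraTneq => ->.
have fg'M r : r \in M -> g' r <= f r /\ f r < r%:R /\ 0 <= g' r.
  by move=> r_M; rewrite -g_off_p ?ne_p //; apply: fgM; rewrite inE r_M orbT.
have fg'_notM r : prime r -> r \notin M -> f r <= g' r /\ g' r < r%:R /\ 0 <= f r.
  move=> r_pr r_notM; rewrite /g'; case: eqP => [->|/eqP r_ne].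
    by rewrite lexx f_lt_p (le_trans g_ge0_p).
  by apply: fg_notM; rewrite // inE negb_or r_ne.
have prod_g' : \prod_(r <- M) ((r%:R - f r) / (r%:R - g' r)) =
               \prod_(r <- M) ((r%:R - f r) / (r%:R - g r)).
  by apply: eq_big_seq => r r_M; rewrite -g_off_p ?ne_p.
have := sieve_sum_update N p_pr wg' wg g_off_p; rewrite /g' eqxx => /(_ gf_p).
apply: le_trans; rewrite big_cons -mulrA ler_wpM2l -?prod_g' ?IH //.
by rewrite divr_ge0 // subr_ge0 ltW // (le_lt_trans gf_p).
Qed.

End SieveSum.

Theorem lemma2 (R : archiRealFieldType) (M : seq nat) (f g : nat -> R) :
  uniq M -> all prime M ->
  (forall p, p \in M -> g p <= f p /\ f p < p%:R /\ 0 <= g p) ->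
  (forall p, prime p -> p \notin M -> f p <= g p /\ g p < p%:R /\ 0 <= f p) ->
  forall z : R, 0 < z ->
  L z g >= (\prod_(p <- M) ((p%:R - f p) / (p%:R - g p))) * L z f.
Proof.
by move=> uM M_pr fgM fg_notM z _; apply: sieve_sum_ge_prod.
Qed.
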